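(* Let $h$ be a decreasing solution to the HJB equation. Then there is no non-empty interval $(a,b)\subset[0,\infty)$ such that $h''(z)=0$ for all $z\in(a,b)$.
   Context: Fix $\mu\in\mathbb R$, $\sigma>0$, $u_0>0$, $r>0$, $\beta>0$, $d>0$. The HJB equation is $$-rh(z)-\mu h'(z)+\tfrac{\sigma^2}{2}h''(z)+\sup_{u\in[0,u_0]}\{(\beta+h'(z))u\}=\mathbf 1_{\{z>d\}}.$$ A solution to the HJB equation is a function $h:[0,\infty)\to[\frac{\beta u_0-1}{r},\frac{\beta u_0}{r}]$ that is continuously differentiable on $[0,\infty)$, twice continuously differentiable on $[0,d]$ and on $(d,\infty)$ respectively (with $h'(0),h''(0)$ the right derivatives and $h''(d)$ the left second derivative), and satisfies the HJB equation for all $z\ge0$. *)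

From Stdlib Require Import Reals.
From Coquelicot Require Import Coquelicot.
Open Scope R_scope.

Definition right_deriv (f : R -> R) (x l : R) : Prop :=
  filterlim (fun t => (f t - f x) / (t - x)) (at_right x) (locally l).

Definition left_deriv (f : R -> R) (x l : R) : Prop :=
  filterlim (fun t => (f t - f x) / (t - x)) (at_left x) (locally l).

Definition right_cont (f : R -> R) (x : R) : Prop :=
  filterlim f (at_right x) (locally (f x)).

Definition left_cont (f : R -> R) (x : R) : Prop :=
  filterlim f (at_left x) (locally (f x)).

Definition sup_ctrl (u0 c : R) : R :=
  real (Lub_Rbar (fun v => exists u, 0 <= u <= u0 /\ v = c * u)).

Definition indic_gt (d z : R) : R := if Rlt_dec d z then 1 else 0.

(* h is a solution of the HJB equation, with h1 = h' and h2 = h''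
   (one-sided at 0, h2 d the left second derivative). Only values on [0,oo) matter. *)
Definition HJB_solution (mu sigma u0 r beta d : R) (h h1 h2 : R -> R) : Prop :=
  (forall z, 0 <= z -> (beta * u0 - 1) / r <= h z <= beta * u0 / r) /\
  right_deriv h 0 (h1 0) /\
  (forall z, 0 < z -> is_derive h z (h1 z)) /\
  right_cont h1 0 /\
  (forall z, 0 < z -> continuous h1 z) /\
  right_deriv h1 0 (h2 0) /\
  (forall z, 0 < z < d -> is_derive h1 z (h2 z)) /\
  left_deriv h1 d (h2 d) /\
  right_cont h2 0 /\
  (forall z, 0 < z < d -> continuous h2 z) /\
  left_cont h2 d /\
  (forall z, d < z -> is_derive h1 z (h2 z)) /\
  (forall z, d < z -> continuous h2 z) /\
  (forall z, 0 <= z ->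
     - r * h z - mu * h1 z + sigma ^ 2 / 2 * h2 z + sup_ctrl u0 (beta + h1 z)
     = indic_gt d z).

Definition decreasing_on_nonneg (h : R -> R) : Prop :=
  forall x y, 0 <= x -> x <= y -> h y <= h x.

From Stdlib Require Import Reals Lra Classical.
From Coquelicot Require Import Coquelicot.
Open Scope R_scope.

(* Where h'' vanishes on an interval, the equation forces h' = 0 and h equal to the
   constant solution (beta u0 - 1_{z>d}) / r of that side of d.  Near a point where h
   sits at this level with h' = 0 the control is saturated (beta + h' > 0), so h minus
   the level solves a linear second-order ODE with zero Cauchy data and vanishes; by
   connectedness h stays at the level on the whole side of d, hence h'(d) = 0.  But
   then the equation gives h'' a strict sign on one side of d (negative on the left if
   h(d) < beta u0 / r, positive on the right otherwise), which makes h' positive near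
   d, contradicting the monotonicity of h. *)

Lemma locally_open_interval (x p q : R) : p < x < q -> locally x (fun y => p < y < q).
Proof. intros Hx. apply (locally_interval _ x p q); simpl; [lra | lra | intros y Hp Hq; lra]. Qed.

Lemma locally_ex_interval (P : R -> Prop) (x : R) :
  locally x P -> exists del, 0 < del /\ forall y, x - del < y < x + del -> P y.
Proof.
  intros [eps Heps]. exists eps. split; [apply cond_pos |].
  intros y Hy. apply Heps. change (Rabs (y - x) < eps). apply Rabs_def1; lra.
Qed.

Lemma continuous_locally_lt (f : R -> R) (x c : R) :
  continuous f x -> f x < c -> locally x (fun y => f y < c).
Proof. intros Hf Hx. exact (Hf _ (open_lt c (f x) Hx)). Qed.

Lemma continuous_locally_gt (f : R -> R) (x c : R) :
  continuous f x -> c < f x -> locally x (fun y => c < f y).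
Proof. intros Hf Hx. exact (Hf _ (open_gt c (f x) Hx)). Qed.

Lemma continuous_eq_of_approx (f : R -> R) (x c : R) :
  continuous f x ->
  (forall eps, 0 < eps -> exists y, Rabs (y - x) < eps /\ f y = c) -> f x = c.
Proof.
  intros Hf Happrox.
  assert (Hfar : forall P : R -> Prop,
             locally x P -> (forall y, P y -> f y <> c) -> False).
  { intros P HP HPc. destruct (locally_ex_interval _ _ HP) as [del [Hdel Hnear]].
    destruct (Happrox del Hdel) as [y [Hy Hfy]]. apply Rabs_def2 in Hy.
    apply (HPc y); [apply Hnear; lra | exact Hfy]. }
  destruct (Rtotal_order (f x) c) as [Hlt | [Heq | Hgt]]; [exfalso | exact Heq | exfalso].
  - apply (Hfar _ (continuous_locally_lt f x c Hf Hlt)). intros y Hy. lra.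
  - apply (Hfar _ (continuous_locally_gt f x c Hf Hgt)). intros y Hy. lra.
Qed.

Lemma continuous_eq_at_endpoint (f : R -> R) (p q x c : R) :
  p < q -> (x = p \/ x = q) -> continuous f x ->
  (forall z, p < z < q -> f z = c) -> f x = c.
Proof.
  intros Hpq Hx Hf Hc. apply (continuous_eq_of_approx f x c Hf).
  intros eps Heps. set (e := Rmin eps (q - p) / 2).
  assert (He : 0 < e < eps /\ e < q - p) by (unfold e, Rmin; destruct Rle_dec; lra).
  destruct Hx as [-> | ->]; [exists (p + e) | exists (q - e)];
    (split; [apply Rabs_def1; lra | apply Hc; lra]).
Qed.

Lemma clopen_propagate_right (P : R -> Prop) (p q x0 : R) :
  (forall z, p < z < q -> P z -> locally z P) ->
  (forall z, p < z < q ->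
     (forall eps, 0 < eps -> exists y, Rabs (y - z) < eps /\ P y) -> P z) ->
  p < x0 < q -> P x0 -> forall z, x0 <= z < q -> P z.
Proof.
  intros Hopen Hclosed Hx0 HPx0.
  set (E := fun x => x0 <= x <= q /\ forall y, x0 <= y <= x -> P y).
  assert (HE : E x0) by (split; [lra | intros y Hy; replace y with x0 by lra; exact HPx0]).
  assert (Hbound : bound E) by (exists q; intros x Hx; apply Hx).
  destruct (completeness E Hbound (ex_intro _ x0 HE)) as [t [Hub Hlub]].
  assert (Hx0t : x0 <= t) by (apply Hub; exact HE).
  assert (Htq : t <= q) by (apply Hlub; intros x Hx; apply Hx).
  assert (Hbelow : forall y, x0 <= y < t -> P y).
  { intros y Hy. destruct (classic (P y)) as [HP | HnP]; [exact HP | exfalso].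
    assert (t <= y); [| lra].
    apply Hlub. intros x [Hx HPx]. destruct (Rle_or_lt x y) as [Hxy | Hyx]; [exact Hxy |].
    exfalso. apply HnP, HPx. lra. }
  assert (HPt : t < q -> P t).
  { intros Htq'. destruct (Req_dec t x0) as [-> | Hne]; [exact HPx0 |].
    apply Hclosed; [lra |]. intros eps Heps.
    exists (Rmax x0 (t - eps / 2)).
    split; [apply Rabs_def1 | apply Hbelow]; unfold Rmax; destruct Rle_dec; lra. }
  assert (Htq_eq : t = q).
  { destruct (Req_dec t q) as [| Hne]; [assumption | exfalso].
    destruct (locally_ex_interval _ _ (Hopen t ltac:(lra) (HPt ltac:(lra))))
      as [del [Hdel Hnear]].
    set (x := Rmin (t + del / 2) ((t + q) / 2)).
    assert (Hx : t < x <= t + del / 2 /\ x <= (t + q) / 2)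
      by (unfold x, Rmin; destruct Rle_dec; lra).
    assert (x <= t); [| lra].
    apply Hub. split; [lra |]. intros y Hy.
    destruct (Rlt_or_le y t); [apply Hbelow | apply Hnear]; lra. }
  intros z Hz. apply Hbelow. lra.
Qed.

Lemma clopen_interval (P : R -> Prop) (p q x0 : R) :
  (forall z, p < z < q -> P z -> locally z P) ->
  (forall z, p < z < q ->
     (forall eps, 0 < eps -> exists y, Rabs (y - z) < eps /\ P y) -> P z) ->
  p < x0 < q -> P x0 -> forall z, p < z < q -> P z.
Proof.
  intros Hopen Hclosed Hx0 HPx0 z Hz.
  destruct (Rle_or_lt x0 z) as [Hle | Hlt].
  { apply (clopen_propagate_right P p q x0); auto; lra. }
  rewrite <- (Ropp_involutive z).
  apply (clopen_propagate_right (fun y => P (- y)) (- q) (- p) (- x0));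
    [| | lra | rewrite Ropp_involutive; exact HPx0 | lra].
  - intros y Hy HPy.
    destruct (locally_ex_interval _ _ (Hopen (- y) ltac:(lra) HPy)) as [del [Hdel Hnear]].
    apply (locally_interval _ y (y - del) (y + del)); simpl; [lra | lra |].
    intros u Hu1 Hu2. apply Hnear. lra.
  - intros y Hy Happrox. apply Hclosed; [lra |]. intros eps Heps.
    destruct (Happrox eps Heps) as [u [Hu HPu]]. exists (- u). split; [| exact HPu].
    replace (- u - - y) with (- (u - y)) by ring. rewrite Rabs_Ropp. exact Hu.
Qed.

Lemma MVT_open (f df : R -> R) (a b : R) : a < b ->
  (forall c, a < c < b -> is_derive f c (df c)) ->
  (forall c, a <= c <= b -> continuous f c) ->
  exists c, a < c < b /\ f b - f a = df c * (b - a).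
Proof.
  intros Hab Hd Hc.
  set (prf := fun c (Hc : a < c < b) =>
     exist (fun l => derivable_pt_abs f c l) (df c)
       (proj1 (is_derive_Reals f c (df c)) (Hd c Hc))).
  set (prid := fun c (_ : a < c < b) => derivable_pt_id c).
  destruct (MVT f id a b prf prid Hab
              (fun c Hc' => proj2 (continuity_pt_filterlim f c) (Hc c Hc'))
              (fun c _ => derivable_continuous_pt _ _ (derivable_pt_id c))) as [c [Hc' E]].
  exists c; split; [exact Hc' |].
  rewrite (derive_pt_eq_0 f c (df c) (prf c Hc')) in E by apply is_derive_Reals, Hd, Hc'.
  rewrite (derive_pt_eq_0 id c 1 (prid c Hc')) in E by apply derivable_pt_lim_id.
  unfold id in E. lra.
Qed.

Lemma is_derive_0_const (f : R -> R) (p q : R) :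
  (forall z, p < z < q -> is_derive f z 0) ->
  forall x y, p < x < q -> p < y < q -> f x = f y.
Proof.
  intros Hd.
  assert (Hle : forall x y, p < x < q -> p < y < q -> x < y -> f x = f y).
  { intros x y Hx Hy Hxy.
    destruct (MVT_open f (fun _ => 0) x y Hxy) as [c [_ E]]; [| | lra].
    - intros c Hc. apply Hd. lra.
    - intros c Hc. apply (ex_derive_continuous (V := R_NormedModule)).
      exists 0. apply Hd. lra. }
  intros x y Hx Hy.
  destruct (Rtotal_order x y) as [Hxy | [-> | Hyx]]; [auto | reflexivity |].
  symmetry. auto.
Qed.

Lemma is_derive_locally_const (f : R -> R) (x c l : R) :
  locally x (fun y => f y = c) -> is_derive f x l -> l = 0.
Proof.
  intros Hc Hd.
  assert (H0 : is_derive f x 0).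
  { apply (is_derive_ext_loc (fun _ => c)); [| apply (@is_derive_const R_AbsRing R_NormedModule)].
    apply (filter_imp _ _ (fun y Hy => eq_sym Hy) Hc). }
  rewrite <- (is_derive_unique f x l Hd). exact (is_derive_unique f x 0 H0).
Qed.

Lemma nonincreasing_derive_nonpos (f : R -> R) (x l : R) :
  (forall y, x <= y -> f y <= f x) -> is_derive f x l -> l <= 0.
Proof.
  intros Hdec Hd. apply is_derive_Reals in Hd.
  destruct (Rle_or_lt l 0) as [? | Hl]; [assumption | exfalso].
  destruct (Hd l Hl) as [del Hdel].
  assert (Hdel2 : 0 < del / 2) by (generalize (cond_pos del); lra).
  specialize (Hdel (del / 2) ltac:(lra)).
  rewrite Rabs_pos_eq in Hdel by lra.
  specialize (Hdel ltac:(generalize (cond_pos del); lra)).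
  assert (Hq : (f (x + del / 2) - f x) / (del / 2) <= 0).
  { unfold Rdiv. apply Rmult_le_0_r; [| left; apply Rinv_0_lt_compat; lra].
    specialize (Hdec (x + del / 2) ltac:(lra)). lra. }
  apply Rabs_def2 in Hdel. lra.
Qed.

Lemma linear_ode1_zero (g : R -> R) (m p q s : R) :
  (forall z, p < z < q -> is_derive g z (m * g z)) -> p < s < q -> g s = 0 ->
  forall z, p < z < q -> g z = 0.
Proof.
  intros Hg Hs Hgs z Hz.
  set (G := fun y => g y * exp (- m * y)).
  assert (HG : forall y, p < y < q -> is_derive G y 0).
  { intros y Hy. evar (l : R). replace 0 with l.
    - apply (is_derive_mult g (fun y => exp (- m * y)));
        [exact (Hg y Hy) | | intros; apply Rmult_comm].
      apply (is_derive_comp exp (fun y => - m * y)); [apply is_derive_exp |].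
      apply (is_derive_scal (fun y => y)), is_derive_id.
    - unfold l. simpl. unfold plus, mult, scal, one; simpl. unfold mult; simpl. ring. }
  assert (E := is_derive_0_const G p q HG z s Hz Hs).
  unfold G in E. rewrite Hgs, Rmult_0_l in E.
  assert (0 < exp (- m * z)) by apply exp_pos. nra.
Qed.

Lemma linear_ode2_zero (A B : R) (g g1 g2 : R -> R) (p q s : R) : 0 <= A ->
  (forall z, p < z < q -> is_derive g z (g1 z)) ->
  (forall z, p < z < q -> is_derive g1 z (g2 z)) ->
  (forall z, p < z < q -> g2 z = A * g z + B * g1 z) ->
  p < s < q -> g s = 0 -> g1 s = 0 -> forall z, p < z < q -> g z = 0.
Proof.
  intros HA Hg Hg1 Hode Hs Hgs Hg1s.
  (* [la] is a real root of X^2 - B X - A; with [m := B - la] the operator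
     D^2 - B D - A factors as (D - m)(D - la). *)
  set (la := (B + sqrt (B * B + 4 * A)) / 2).
  set (m := B - la).
  assert (Hroot : m * la = - A).
  { assert (Hsq := sqrt_sqrt (B * B + 4 * A) ltac:(nra)). unfold m, la. nra. }
  assert (Hfirst : forall z, p < z < q -> g1 z - la * g z = 0).
  { apply (linear_ode1_zero _ m p q s); [| exact Hs | rewrite Hgs, Hg1s; ring].
    intros z Hz.
    replace (m * (g1 z - la * g z)) with (g2 z - la * g1 z)
      by (rewrite Hode by exact Hz; replace A with (- (m * la)) by lra; unfold m; ring).
    apply (is_derive_minus g1 (fun y => la * g y)); [exact (Hg1 z Hz) |].
    apply is_derive_scal, Hg, Hz. }
  apply (linear_ode1_zero g la p q s); [| exact Hs | exact Hgs].
  intros z Hz. replace (la * g z) with (g1 z) by (specialize (Hfirst z Hz); lra).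
  exact (Hg z Hz).
Qed.

Lemma sup_ctrl_nonneg (u0 c : R) : 0 <= u0 -> 0 <= c -> sup_ctrl u0 c = u0 * c.
Proof.
  intros Hu Hc. unfold sup_ctrl.
  rewrite (is_lub_Rbar_unique _ (Finite (u0 * c))); [reflexivity |].
  split.
  - intros v [u [Hu' ->]]. simpl. nra.
  - intros b Hb. rewrite Rmult_comm. apply (Hb (c * u0)). exists u0. split; [lra | ring].
Qed.

Lemma indic_gt_le (d z : R) : z <= d -> indic_gt d z = 0.
Proof. intros H. unfold indic_gt. destruct (Rlt_dec d z); lra. Qed.

Lemma indic_gt_gt (d z : R) : d < z -> indic_gt d z = 1.
Proof. intros H. unfold indic_gt. destruct (Rlt_dec d z); lra. Qed.

Section ThresholdHJB.

Variables (mu sigma u0 r beta d : R) (h h1 h2 : R -> R).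

Hypothesis sigma_pos : 0 < sigma.
Hypothesis u0_pos : 0 < u0.
Hypothesis r_pos : 0 < r.
Hypothesis beta_pos : 0 < beta.
Hypothesis d_pos : 0 < d.
Hypothesis h_deriv : forall z, 0 < z -> is_derive h z (h1 z).
Hypothesis h1_cont : forall z, 0 < z -> continuous h1 z.
Hypothesis h1_deriv : forall z, 0 < z -> z <> d -> is_derive h1 z (h2 z).
Hypothesis h1_nonpos : forall z, 0 < z -> h1 z <= 0.
Hypothesis hjb : forall z, 0 < z ->
  - r * h z - mu * h1 z + sigma ^ 2 / 2 * h2 z + sup_ctrl u0 (beta + h1 z) = indic_gt d z.

(* The constant solution of the equation on a side of [d] where the indicator is [I]. *)
Definition level (I : R) : R := (beta * u0 - I) / r.

Definition regime (I p q : R) : Prop :=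
  forall z, p < z < q -> 0 < z /\ z <> d /\ indic_gt d z = I.

Lemma regime_sub (I p q p' q' : R) : regime I p q -> p <= p' -> q' <= q -> regime I p' q'.
Proof. intros Hreg Hp Hq z Hz. apply Hreg. lra. Qed.

Lemma regime_below_threshold : regime 0 0 d.
Proof. intros z Hz. split; [lra | split; [lra | apply indic_gt_le; lra]]. Qed.

Lemma regime_above_threshold (q : R) : regime 1 d q.
Proof. intros z Hz. split; [lra | split; [lra | apply indic_gt_gt; lra]]. Qed.

Lemma h_continuous (z : R) : 0 < z -> continuous h z.
Proof.
  intros Hz. apply (ex_derive_continuous (V := R_NormedModule)).
  exists (h1 z). exact (h_deriv z Hz).
Qed.

Definition saturated_rhs (I y : R) : R := r * (h y - level I) + (mu - u0) * h1 y.

Lemma hjb_saturated (z : R) : 0 < z -> - beta < h1 z ->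
  sigma ^ 2 / 2 * h2 z = saturated_rhs (indic_gt d z) z.
Proof.
  intros Hz Hsat. assert (E := hjb z Hz).
  rewrite sup_ctrl_nonneg in E by lra. unfold saturated_rhs, level.
  replace (r * (h z - (beta * u0 - indic_gt d z) / r))
    with (r * h z - beta * u0 + indic_gt d z) by (field; lra).
  lra.
Qed.

Lemma saturated_rhs_continuous (I z : R) : 0 < z -> continuous (saturated_rhs I) z.
Proof.
  intros Hz. unfold saturated_rhs.
  apply (continuous_plus (fun y => r * (h y - level I)) (fun y => (mu - u0) * h1 y)).
  - apply (continuous_scal_r r (fun y => h y - level I)).
    apply (continuous_minus h (fun _ => level I));
      [exact (h_continuous z Hz) | apply continuous_const].
  - apply (continuous_scal_r (mu - u0) h1), h1_cont, Hz.
Qed.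

Lemma flat_level (I p q : R) : regime I p q -> p < q -> (forall z, p < z < q -> h2 z = 0) ->
  forall z, p < z < q -> h z = level I /\ h1 z = 0.
Proof.
  intros Hreg Hpq Hflat.
  set (m := (p + q) / 2). assert (Hm : p < m < q) by (unfold m; lra).
  assert (h1_const : forall z, p < z < q -> h1 z = h1 m).
  { intros z Hz. apply (is_derive_0_const h1 p q); [| exact Hz | exact Hm].
    intros y Hy. destruct (Hreg y Hy) as [Hy0 [Hyd _]].
    rewrite <- (Hflat y Hy). exact (h1_deriv y Hy0 Hyd). }
  assert (h_const : forall z, p < z < q -> h z = h m).
  { intros z Hz.
    destruct (Hreg z Hz) as [Hz0 [_ HIz]]. destruct (Hreg m Hm) as [Hm0 [_ HIm]].
    assert (Ez := hjb z Hz0). assert (Em := hjb m Hm0).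
    rewrite HIz, (Hflat z Hz), (h1_const z Hz) in Ez. rewrite HIm, (Hflat m Hm) in Em.
    apply (Rmult_eq_reg_l r); lra. }
  intros z Hz. destruct (Hreg z Hz) as [Hz0 [_ HIz]].
  assert (Hz1 : h1 z = 0).
  { apply (is_derive_locally_const h z (h m)); [| exact (h_deriv z Hz0)].
    apply (filter_imp (fun y => p < y < q)); [exact h_const | apply locally_open_interval, Hz]. }
  split; [| exact Hz1].
  assert (E := hjb_saturated z Hz0 ltac:(lra)).
  unfold saturated_rhs in E. rewrite (Hflat z Hz), Hz1, HIz in E.
  apply (Rmult_eq_reg_l r); lra.
Qed.

Lemma level_locally (I p q s : R) : regime I p q -> p < s < q ->
  h s = level I -> h1 s = 0 -> locally s (fun z => h z = level I /\ h1 z = 0).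
Proof.
  intros Hreg Hs Hhs Hh1s.
  assert (Hnear : locally s (fun z => p < z < q /\ - beta < h1 z)).
  { apply filter_and; [apply locally_open_interval, Hs |].
    apply continuous_locally_gt; [apply h1_cont, Hreg, Hs | lra]. }
  destruct (locally_ex_interval _ _ Hnear) as [del [Hdel Hball]].
  assert (h_level : forall z, s - del < z < s + del -> h z = level I).
  { intros z Hz.
    enough (h z - level I = 0) by lra.
    apply (linear_ode2_zero (2 * r / sigma ^ 2) (2 * (mu - u0) / sigma ^ 2)
             (fun y => h y - level I) h1 h2 (s - del) (s + del) s);
      [| | | | lra | lra | exact Hh1s | exact Hz].
    - assert (0 < sigma ^ 2) by (apply pow_lt; lra).
      apply Rlt_le, Rdiv_lt_0_compat; lra.
    - intros y Hy. destruct (Hball y Hy) as [Hy_in _]. destruct (Hreg y Hy_in) as [Hy0 _].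
      replace (h1 y) with (h1 y - 0) by ring.
      apply (is_derive_minus h (fun _ => level I));
        [exact (h_deriv y Hy0) | apply (@is_derive_const R_AbsRing R_NormedModule)].
    - intros y Hy. destruct (Hball y Hy) as [Hy_in _]. destruct (Hreg y Hy_in) as [Hy0 [Hyd _]].
      exact (h1_deriv y Hy0 Hyd).
    - intros y Hy. destruct (Hball y Hy) as [Hy_in Hsat]. destruct (Hreg y Hy_in) as [Hy0 [_ HIy]].
      assert (E := hjb_saturated y Hy0 Hsat). rewrite HIy in E. unfold saturated_rhs in E.
      assert (0 < sigma ^ 2) by (apply pow_lt; lra).
      apply (Rmult_eq_reg_l (sigma ^ 2 / 2)); [rewrite E; field | ]; lra. }
  apply (filter_imp (fun z => s - del < z < s + del)); [| apply locally_open_interval; lra].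
  intros z Hz. split; [exact (h_level z Hz) |].
  destruct (Hball z Hz) as [Hz_in _]. destruct (Hreg z Hz_in) as [Hz0 _].
  apply (is_derive_locally_const h z (level I)); [| exact (h_deriv z Hz0)].
  apply (filter_imp (fun y => s - del < y < s + del));
    [exact h_level | apply locally_open_interval, Hz].
Qed.

Lemma level_on_regime (I p q x0 : R) : regime I p q -> p < x0 < q ->
  h x0 = level I -> h1 x0 = 0 -> forall z, p < z < q -> h z = level I /\ h1 z = 0.
Proof.
  intros Hreg Hx0 Hh Hh1.
  apply (clopen_interval (fun z => h z = level I /\ h1 z = 0) p q x0);
    [| | exact Hx0 | split; assumption].
  - intros z Hz [Hhz Hh1z]. exact (level_locally I p q z Hreg Hz Hhz Hh1z).
  - intros z Hz Happrox. destruct (Hreg z Hz) as [Hz0 _].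
    split; [apply (continuous_eq_of_approx h z); [apply h_continuous, Hz0 |]
           | apply (continuous_eq_of_approx h1 z); [apply h1_cont, Hz0 |]];
      intros eps Heps; destruct (Happrox eps Heps) as [y [Hy [Hhy Hh1y]]]; eauto.
Qed.

Lemma critical_below_level (I p s : R) : regime I p s -> p < s -> 0 < s ->
  h1 s = 0 -> h s < level I -> False.
Proof.
  intros Hreg Hps Hs0 Hh1s Hbelow.
  assert (Hnear : locally s (fun y => saturated_rhs I y < 0 /\ - beta < h1 y)).
  { apply filter_and.
    - apply continuous_locally_lt;
        [apply saturated_rhs_continuous, Hs0 | unfold saturated_rhs; rewrite Hh1s; nra].
    - apply continuous_locally_gt; [apply h1_cont, Hs0 | lra]. }
  destruct (locally_ex_interval _ _ Hnear) as [del [Hdel Hball]].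
  set (w := Rmax ((p + s) / 2) (s - del / 2)).
  assert (Hw : p < w < s /\ s - del < w) by (unfold w, Rmax; destruct Rle_dec; lra).
  destruct (Hreg w ltac:(lra)) as [Hw0 _].
  destruct (MVT_open h1 h2 w s) as [c [Hc Hmvt]]; [lra | | |].
  - intros c Hc. destruct (Hreg c ltac:(lra)) as [Hc0 [Hcd _]]. exact (h1_deriv c Hc0 Hcd).
  - intros c Hc. apply h1_cont. lra.
  - destruct (Hreg c ltac:(lra)) as [Hc0 [_ HIc]].
    destruct (Hball c ltac:(lra)) as [Hrhs Hsat].
    assert (E := hjb_saturated c Hc0 Hsat). rewrite HIc in E.
    assert (0 < sigma ^ 2) by (apply pow_lt; lra).
    assert (h2 c < 0) by nra.
    assert (h1 w <= 0) by (apply h1_nonpos; lra).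
    rewrite Hh1s in Hmvt. nra.
Qed.

Lemma critical_above_level (I s q : R) : regime I s q -> s < q -> 0 < s ->
  h1 s = 0 -> level I < h s -> False.
Proof.
  intros Hreg Hsq Hs0 Hh1s Habove.
  assert (Hnear : locally s (fun y => 0 < saturated_rhs I y /\ - beta < h1 y)).
  { apply filter_and.
    - apply continuous_locally_gt;
        [apply saturated_rhs_continuous, Hs0 | unfold saturated_rhs; rewrite Hh1s; nra].
    - apply continuous_locally_gt; [apply h1_cont, Hs0 | lra]. }
  destruct (locally_ex_interval _ _ Hnear) as [del [Hdel Hball]].
  set (w := Rmin ((s + q) / 2) (s + del / 2)).
  assert (Hw : s < w < q /\ w < s + del) by (unfold w, Rmin; destruct Rle_dec; lra).
  destruct (MVT_open h1 h2 s w) as [c [Hc Hmvt]]; [lra | | |].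
  - intros c Hc. destruct (Hreg c ltac:(lra)) as [Hc0 [Hcd _]]. exact (h1_deriv c Hc0 Hcd).
  - intros c Hc. apply h1_cont. lra.
  - destruct (Hreg c ltac:(lra)) as [Hc0 [_ HIc]].
    destruct (Hball c ltac:(lra)) as [Hrhs Hsat].
    assert (E := hjb_saturated c Hc0 Hsat). rewrite HIc in E.
    assert (0 < sigma ^ 2) by (apply pow_lt; lra).
    assert (0 < h2 c) by nra.
    assert (h1 w <= 0) by (apply h1_nonpos; lra).
    rewrite Hh1s in Hmvt. nra.
Qed.

Lemma h1_threshold_ne0 : h1 d <> 0.
Proof.
  intros Hd0.
  assert (Hlevels : level 1 < level 0).
  { unfold level, Rdiv. apply Rmult_lt_compat_r; [apply Rinv_0_lt_compat |]; lra. }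
  destruct (Rlt_or_le (h d) (level 0)) as [Hlow | Hhigh].
  - exact (critical_below_level 0 0 d regime_below_threshold d_pos d_pos Hd0 Hlow).
  - apply (critical_above_level 1 d (d + 1) (regime_above_threshold (d + 1))); lra.
Qed.

Theorem no_flat_h2_interval (a b : R) : 0 <= a < b -> ~ (forall z, a < z < b -> h2 z = 0).
Proof.
  intros Hab Hflat. apply h1_threshold_ne0.
  destruct (Rle_or_lt d a) as [Hda | Had].
  - assert (Hreg : regime 1 a b)
      by (apply (regime_sub 1 d b); [apply regime_above_threshold | lra | lra]).
    destruct (flat_level 1 a b Hreg (proj2 Hab) Hflat ((a + b) / 2) ltac:(lra)) as [Hh Hh1].
    apply (continuous_eq_at_endpoint h1 d b d 0); [lra | now left | apply h1_cont, d_pos |].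
    intros z Hz.
    apply (level_on_regime 1 d b ((a + b) / 2) (regime_above_threshold b)); auto; lra.
  - set (q := Rmin b d).
    assert (Hq : a < q <= d /\ q <= b) by (unfold q, Rmin; destruct Rle_dec; lra).
    assert (Hreg : regime 0 a q)
      by (apply (regime_sub 0 0 d); [apply regime_below_threshold | lra | lra]).
    destruct (flat_level 0 a q Hreg ltac:(lra) (fun z Hz => Hflat z ltac:(lra))
                ((a + q) / 2) ltac:(lra)) as [Hh Hh1].
    apply (continuous_eq_at_endpoint h1 0 d d 0); [lra | now right | apply h1_cont, d_pos |].
    intros z Hz.
    apply (level_on_regime 0 0 d ((a + q) / 2) regime_below_threshold); auto; lra.
Qed.

End ThresholdHJB.

Theorem lemma2p2 (mu sigma u0 r beta d : R) (h h1 h2 : R -> R) :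
  0 < sigma -> 0 < u0 -> 0 < r -> 0 < beta -> 0 < d ->
  HJB_solution mu sigma u0 r beta d h h1 h2 ->
  decreasing_on_nonneg h ->
  ~ (exists a b, 0 <= a < b /\ forall z, a < z < b -> h2 z = 0).
Proof.
  intros Hsigma Hu0 Hr Hbeta Hd HJB Hdecr [a [b [Hab Hflat]]].
  destruct HJB as [_ [_ [Hderiv [_ [Hcont1 [_ [Hderiv1_below
                   [_ [_ [_ [_ [Hderiv1_above [_ Hhjb]]]]]]]]]]]]].
  assert (Hderiv1 : forall z, 0 < z -> z <> d -> is_derive h1 z (h2 z)).
  { intros z Hz Hzd. destruct (Rlt_or_le z d); [apply Hderiv1_below | apply Hderiv1_above]; lra. }
  assert (Hnonpos : forall z, 0 < z -> h1 z <= 0).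
  { intros z Hz. apply (nonincreasing_derive_nonpos h z); [| exact (Hderiv z Hz)].
    intros y Hy. apply Hdecr; lra. }
  exact (no_flat_h2_interval mu sigma u0 r beta d h h1 h2 Hsigma Hu0 Hr Hbeta Hd
           Hderiv Hcont1 Hderiv1 Hnonpos (fun z Hz => Hhjb z (Rlt_le _ _ Hz)) a b Hab Hflat).
Qed.
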